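(* Let $\mathbb X=\langle X,\rho\rangle$ and $\mathbb Y=\langle Y,\sigma\rangle$ be countable structures with $\rho,\sigma$ equivalence relations, each having infinitely many singleton classes and exactly one class of size $n$ for every $n\ge2$, and such that $\mathbb X$ has exactly one infinite class while $\mathbb Y$ has exactly two infinite classes. Then $\mathbb X\equiv\mathbb Y$ (elementary equivalence), $\mathbb X\sim_c\mathbb Y$, and $\mathbb X\not\equiv_{\infty\omega}\mathbb Y$.
   Context: A condensation from $\langle X,\rho\rangle$ onto $\langle Y,\sigma\rangle$ is a bijection $F:X\to Y$ with $x\,\rho\,x'\Rightarrow F(x)\,\sigma\,F(x')$; $\mathbb X\sim_c\mathbb Y$ means condensations exist in both directions. $\equiv$ is first order elementary equivalence and $\equiv_{\infty\omega}$ is equivalence with respect to all $L_{\infty\omega}$-sentences (language with one binary relation symbol). *)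

From Stdlib Require Import Arith List RelationClasses.
Import ListNotations.

Definition countable (X : Type) : Prop :=
  exists f : X -> nat, forall x y, f x = f y -> x = y.

Definition class_size {X : Type} (rho : X -> X -> Prop) (x : X) (n : nat) : Prop :=
  exists l : list X, NoDup l /\ length l = n /\ forall y, rho x y <-> In y l.

Definition infinite_class {X : Type} (rho : X -> X -> Prop) (x : X) : Prop :=
  ~ exists l : list X, forall y, rho x y -> In y l.

Definition inf_many_singletons {X : Type} (rho : X -> X -> Prop) : Prop :=
  ~ exists l : list X, forall x, (forall y, rho x y -> y = x) -> In x l.

Definition one_class_each_size {X : Type} (rho : X -> X -> Prop) : Prop :=
  forall n, 2 <= n ->
    exists x, class_size rho x n /\ forall x', class_size rho x' n -> rho x x'.

Definition exactly_one_infinite_class {X : Type} (rho : X -> X -> Prop) : Prop :=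
  exists x, infinite_class rho x /\ forall z, infinite_class rho z -> rho x z.

Definition exactly_two_infinite_classes {X : Type} (rho : X -> X -> Prop) : Prop :=
  exists x1 x2, infinite_class rho x1 /\ infinite_class rho x2 /\ ~ rho x1 x2 /\
    forall z, infinite_class rho z -> rho x1 z \/ rho x2 z.

Definition condensation {X Y : Type} (rho : X -> X -> Prop) (sigma : Y -> Y -> Prop)
  (F : X -> Y) : Prop :=
  (forall x x', F x = F x' -> x = x') /\ (forall y, exists x, F x = y) /\
  (forall x x', rho x x' -> sigma (F x) (F x')).

Definition condenses {X Y : Type} (rho : X -> X -> Prop) (sigma : Y -> Y -> Prop) : Prop :=
  exists F : X -> Y, condensation rho sigma F.

Definition scons {X : Type} (x : X) (e : nat -> X) : nat -> X :=
  fun n => match n with 0 => x | S k => e k end.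

Inductive form : Type :=
  | FRel : nat -> nat -> form
  | FEq : nat -> nat -> form
  | FNeg : form -> form
  | FAnd : form -> form -> form
  | FEx : form -> form.

Fixpoint closed_at (n : nat) (p : form) : Prop :=
  match p with
  | FRel i j | FEq i j => i < n /\ j < n
  | FNeg q => closed_at n q
  | FAnd q r => closed_at n q /\ closed_at n r
  | FEx q => closed_at (S n) q
  end.

Definition sentence (p : form) : Prop := closed_at 0 p.

Fixpoint sat {X : Type} (rho : X -> X -> Prop) (e : nat -> X) (p : form) : Prop :=
  match p with
  | FRel i j => rho (e i) (e j)
  | FEq i j => e i = e j
  | FNeg q => ~ sat rho e q
  | FAnd q r => sat rho e q /\ sat rho e r
  | FEx q => exists x, sat rho (scons x e) q
  end.

(* a sentence holds in a structure (structures here are nonempty) *)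
Definition models {X : Type} (rho : X -> X -> Prop) (p : form) : Prop :=
  forall e : nat -> X, sat rho e p.

Definition elem_equiv {X Y : Type} (rho : X -> X -> Prop) (sigma : Y -> Y -> Prop) : Prop :=
  forall p, sentence p -> (models rho p <-> models sigma p).

Inductive iform : Type :=
  | IRel : nat -> nat -> iform
  | IEq : nat -> nat -> iform
  | INeg : iform -> iform
  | IConj : forall (I : Type), (I -> iform) -> iform
  | IEx : iform -> iform.

Fixpoint iclosed_at (n : nat) (p : iform) : Prop :=
  match p with
  | IRel i j | IEq i j => i < n /\ j < n
  | INeg q => iclosed_at n q
  | IConj J f => forall i : J, iclosed_at n (f i)
  | IEx q => iclosed_at (S n) q
  end.

Definition isentence (p : iform) : Prop := iclosed_at 0 p.

Fixpoint isat {X : Type} (rho : X -> X -> Prop) (e : nat -> X) (p : iform) : Prop :=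
  match p with
  | IRel i j => rho (e i) (e j)
  | IEq i j => e i = e j
  | INeg q => ~ isat rho e q
  | IConj J f => forall i : J, isat rho e (f i)
  | IEx q => exists x, isat rho (scons x e) q
  end.

Definition imodels {X : Type} (rho : X -> X -> Prop) (p : iform) : Prop :=
  forall e : nat -> X, isat rho e p.

Definition linf_equiv {X Y : Type} (rho : X -> X -> Prop) (sigma : Y -> Y -> Prop) : Prop :=
  forall p, isentence p -> (imodels rho p <-> imodels sigma p).

(* For elementary equivalence, play the Ehrenfeucht-Fraisse game of [T] rounds keeping,
   besides equalities and the relation, the size of each chosen class truncated at [T]:
   a class of size [>= T] can be answered by a large finite class, as there is one of
   every size, and a fresh singleton by one of the infinitely many singletons.
   A condensation may merge classes: send the infinite class of X onto one infinite class
   of Y and the singletons of X onto the singletons together with the other infinite class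
   (both are countably infinite sets); conversely send both infinite classes of Y into
   that of X; the n-classes correspond to each other.  Finally "there are two unrelated
   elements with infinite classes" is an L_{infinity omega} sentence, infinity of a class
   being the countable conjunction of "at least m elements", true in Y and false in X. *)

From Stdlib Require Import Arith List RelationClasses Lia Classical ClassicalEpsilon.
Import ListNotations.

Definition infinite {A : Type} (P : A -> Prop) : Prop :=
  ~ exists l : list A, forall x, P x -> In x l.

Definition singleton {X : Type} (rho : X -> X -> Prop) (x : X) : Prop :=
  forall y, rho x y -> y = x.

Definition class_ge {X : Type} (rho : X -> X -> Prop) (x : X) (m : nat) : Prop :=
  exists l : list X, NoDup l /\ length l = m /\ forall y, In y l -> rho x y.

Lemma infinite_inhabited {A : Type} (P : A -> Prop) : infinite P -> inhabited A.
Proof.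
  intros HP. apply NNPP. intros Hempty. apply HP. exists [].
  intros x. exfalso. exact (Hempty (inhabits x)).
Qed.

Lemma infinite_mono {A : Type} (P Q : A -> Prop) :
  (forall x, P x -> Q x) -> infinite P -> infinite Q.
Proof. intros HPQ HP [l Hl]. apply HP. exists l. auto. Qed.

Lemma nodup_cover {A : Type} (P : A -> Prop) (l : list A) :
  (forall x, P x -> In x l) -> exists l', NoDup l' /\ forall x, P x <-> In x l'.
Proof.
  revert P. induction l as [|a l IH]; intros P HP.
  - exists []. split; [constructor|]. intros x. split; [apply HP|intros []].
  - destruct (IH (fun x => P x /\ x <> a)) as [l' [Hnd Hl']].
    { intros x [Hx Hne]. destruct (HP x Hx) as [->|]; [congruence|auto]. }
    destruct (classic (P a)) as [Ha|Ha].
    + exists (a :: l'). split.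
      * constructor; auto. rewrite <- Hl'. tauto.
      * intros x. simpl. rewrite <- Hl'.
        destruct (classic (x = a)) as [->|]; intuition congruence.
    + exists l'. intros; split; auto. intros x. rewrite <- Hl'.
      intuition congruence.
Qed.

Lemma in_map_seq {A : Type} (f : nat -> A) (n : nat) (y : A) :
  In y (map f (seq 0 n)) <-> exists j, j < n /\ f j = y.
Proof.
  rewrite in_map_iff. split.
  - intros [j [<- Hj]]. apply in_seq in Hj. exists j. split; [lia|auto].
  - intros [j [Hj <-]]. exists j. split; auto. apply in_seq. lia.
Qed.

Lemma map_indices {A : Type} (f : nat -> A) (n : nat) (l : list A) :
  (forall y, In y l -> exists j, j < n /\ f j = y) ->
  exists js, map f js = l /\ forall j, In j js -> j < n.
Proof.
  induction l as [|a l IH]; intros Hl.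
  - exists []. split; auto. intros j [].
  - destruct (Hl a (or_introl eq_refl)) as [j [Hj <-]].
    destruct IH as [js [<- Hjs]]; [intros y Hy; apply Hl; simpl; auto|].
    exists (j :: js). split; auto. intros k [<-|Hk]; auto.
Qed.

Lemma NoDup_map_transfer {A B : Type} (e : nat -> A) (f : nat -> B) (js : list nat) :
  (forall j j', In j js -> In j' js -> e j = e j' -> f j = f j') ->
  NoDup (map f js) -> NoDup (map e js).
Proof.
  induction js as [|a js IH]; intros Hef Hnd; simpl in *; [constructor|].
  inversion Hnd as [|? ? Hna Hnd']; subst. constructor; auto.
  rewrite in_map_iff. intros [j [Hj Hin]]. apply Hna. apply in_map_iff.
  exists j. split; auto.
Qed.

Section ClassSizes.
Context {X : Type} (rho : X -> X -> Prop).

Lemma class_ge_le (x : X) (m m' : nat) : class_ge rho x m -> m' <= m -> class_ge rho x m'.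
Proof.
  intros Hm Hle. induction Hle as [|m Hle IH]; auto. apply IH.
  destruct Hm as [[|a l] [Hnd [Hlen Hl]]]; [discriminate|].
  inversion Hnd; subst. exists l. simpl in *. repeat split; auto.
Qed.

Lemma class_ge_0 (x : X) : class_ge rho x 0.
Proof. exists []. repeat split; [constructor|intros y []]. Qed.

Lemma class_size_ge (x : X) (n m : nat) :
  class_size rho x n -> (class_ge rho x m <-> m <= n).
Proof.
  intros [l [Hnd [<- Hl]]]. split.
  - intros [l' [Hnd' [<- Hl']]]. apply NoDup_incl_length; auto.
    intros y Hy. apply Hl. auto.
  - intros Hm. apply class_ge_le with (length l); auto.
    exists l. repeat split; auto. intros y. apply Hl.
Qed.

Lemma class_size_unique (x : X) (n m : nat) :
  class_size rho x n -> class_size rho x m -> n = m.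
Proof.
  intros Hn Hm. apply Nat.le_antisymm.
  - apply (class_size_ge x m n Hm), (class_size_ge x n n Hn). lia.
  - apply (class_size_ge x n m Hn), (class_size_ge x m m Hm). lia.
Qed.

Lemma class_size_of_ge (x : X) (m : nat) :
  class_ge rho x m -> ~ class_ge rho x (S m) -> class_size rho x m.
Proof.
  intros [l [Hnd [Hlen Hl]]] Hnot. exists l. repeat split; auto.
  intros Hy. apply NNPP. intros Hyl. apply Hnot. exists (y :: l).
  repeat split; simpl; auto; [constructor; auto|]. intros z [<-|Hz]; auto.
Qed.

Lemma class_ge_or_size (x : X) (T : nat) :
  class_ge rho x T \/ exists m, m < T /\ class_size rho x m.
Proof.
  induction T as [|T [HT|[m [Hm Hsize]]]].
  - left. apply class_ge_0.
  - destruct (classic (class_ge rho x (S T))) as [|HS]; auto.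
    right. exists T. split; auto. apply class_size_of_ge; auto.
  - right. exists m. split; auto.
Qed.

Lemma class_size_of_cover (x : X) (l : list X) :
  (forall y, rho x y -> In y l) -> exists s, s <= length l /\ class_size rho x s.
Proof.
  intros Hcover. destruct (nodup_cover (rho x) l Hcover) as [l' [Hnd Hl']].
  exists (length l'). split.
  - apply NoDup_incl_length; auto. intros y Hy. apply Hcover, Hl', Hy.
  - exists l'. auto.
Qed.

Lemma infinite_class_not_size (x : X) (n : nat) :
  infinite_class rho x -> ~ class_size rho x n.
Proof. intros Hinf [l [_ [_ Hl]]]. apply Hinf. exists l. intros y. apply Hl. Qed.

Lemma infinite_class_iff_ge (x : X) : infinite_class rho x <-> forall m, class_ge rho x m.
Proof.
  split.
  - intros Hinf m. induction m as [|m [l [Hnd [Hlen Hl]]]]; [apply class_ge_0|].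
    assert (Hnew : exists y, rho x y /\ ~ In y l).
    { apply NNPP. intros Hno. apply Hinf. exists l. intros y Hy.
      apply NNPP. eauto. }
    destruct Hnew as [y [Hy Hyl]]. exists (y :: l).
    repeat split; simpl; auto; [constructor; auto|]. intros z [<-|Hz]; auto.
  - intros Hge [l Hl]. destruct (Hge (S (length l))) as [l' [Hnd [Hlen Hl']]].
    assert (length l' <= length l) by (apply NoDup_incl_length; auto; intros y Hy; auto).
    lia.
Qed.

Context `{Equivalence X rho}.

Lemma class_ge_1 (x : X) : class_ge rho x 1.
Proof.
  exists [x]. repeat split; [repeat constructor; intros []|].
  intros y [<-|[]]. reflexivity.
Qed.

Lemma class_size_pos (x : X) (n : nat) : class_size rho x n -> 1 <= n.
Proof. intros Hn. apply (class_size_ge x n 1 Hn), class_ge_1. Qed.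

Lemma class_ge_resp (x x' : X) (m : nat) :
  rho x x' -> class_ge rho x m -> class_ge rho x' m.
Proof.
  intros Hxx' [l [Hnd [Hlen Hl]]]. exists l. repeat split; auto.
  intros y Hy. rewrite <- Hxx'. auto.
Qed.

Lemma class_size_resp (x x' : X) (n : nat) :
  rho x x' -> class_size rho x n -> class_size rho x' n.
Proof.
  intros Hxx' [l [Hnd [Hlen Hl]]]. exists l. split; [auto|split; [auto|]].
  intros y. rewrite <- Hl, Hxx'. reflexivity.
Qed.

Lemma infinite_class_resp (x x' : X) :
  rho x x' -> infinite_class rho x -> infinite_class rho x'.
Proof. intros Hxx' Hinf [l Hl]. apply Hinf. exists l. intros y Hy. apply Hl. rewrite <- Hxx'. auto. Qed.

Lemma singleton_iff_size_1 (x : X) : singleton rho x <-> class_size rho x 1.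
Proof.
  split.
  - intros Hs. exists [x]. repeat split; [repeat constructor; intros []| |].
    + intros Hy. left. symmetry. auto.
    + intros [<-|[]]. reflexivity.
  - intros [[|a [|b l]] [Hnd [Hlen Hl]]] y Hy; try discriminate.
    assert (Hx : In x [a]) by (apply Hl; reflexivity).
    apply Hl in Hy. destruct Hx as [<-|[]], Hy as [<-|[]]. reflexivity.
Qed.

Lemma class_trichotomy (x : X) :
  infinite_class rho x \/ singleton rho x \/ exists n, 2 <= n /\ class_size rho x n.
Proof.
  destruct (classic (infinite_class rho x)) as [|Hfin]; auto. right.
  apply NNPP in Hfin. destruct Hfin as [l Hl].
  destruct (class_size_of_cover x l Hl) as [n [_ Hn]].
  pose proof (class_size_pos x n Hn).
  destruct (Nat.eq_dec n 1) as [->|]; [left; apply singleton_iff_size_1; auto|].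
  right. exists n. split; auto. lia.
Qed.

End ClassSizes.

Lemma class_size_transfer {X Y : Type} (rho : X -> X -> Prop) (sigma : Y -> Y -> Prop)
  (x : X) (y : Y) (T m : nat) :
  (forall k, k <= T -> (class_ge rho x k <-> class_ge sigma y k)) ->
  m < T -> class_size sigma y m -> class_size rho x m.
Proof.
  intros Hxy HmT Hy. apply class_size_of_ge.
  - apply Hxy; [lia|]. apply (class_size_ge sigma y m m Hy). lia.
  - rewrite (Hxy (S m)) by lia. rewrite (class_size_ge sigma y m (S m) Hy). lia.
Qed.

Lemma class_size_same_ge {X Y : Type} (rho : X -> X -> Prop) (sigma : Y -> Y -> Prop)
  (x : X) (y : Y) (n : nat) :
  class_size rho x n -> class_size sigma y n -> forall k, class_ge rho x k <-> class_ge sigma y k.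
Proof. intros Hx Hy k. rewrite (class_size_ge rho x n k Hx), (class_size_ge sigma y n k Hy). tauto. Qed.

Section OneClassEachSize.
Context {X : Type} (rho : X -> X -> Prop) `{Equivalence X rho}
  (Hone : one_class_each_size rho).

Lemma class_size_related (n : nat) (u v : X) :
  2 <= n -> class_size rho u n -> class_size rho v n -> rho u v.
Proof.
  intros Hn Hu Hv. destruct (Hone n Hn) as [r [_ Hr]].
  transitivity r; [symmetry|]; auto.
Qed.

Lemma class_of_size_list (n : nat) : 2 <= n ->
  exists l, NoDup l /\ length l = n /\ forall u, class_size rho u n <-> In u l.
Proof.
  intros Hn. destruct (Hone n Hn) as [r [Hr Hrel]].
  destruct Hr as [l [Hnd [Hlen Hl]]]. exists l. split; [auto|split; [auto|]].
  intros u. split; intros Hu.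
  - apply Hl. auto.
  - apply (class_size_resp rho r); [apply Hl, Hu|]. exists l. auto.
Qed.

Lemma large_class_avoiding (l : list X) (T : nat) :
  exists y s, T <= s /\ class_size rho y s /\ forall z, In z l -> ~ rho y z.
Proof.
  revert T. induction l as [|z l IH]; intros T.
  - destruct (Hone (T + 2)) as [y [Hy _]]; [lia|].
    exists y, (T + 2). repeat split; auto. lia.
  - destruct (IH T) as [y1 [s1 [Hs1 [Hy1 Hl1]]]].
    destruct (classic (rho y1 z)) as [Hz|Hz].
    + destruct (IH (S s1)) as [y2 [s2 [Hs2 [Hy2 Hl2]]]].
      exists y2, s2. repeat split; [lia|auto|].
      intros w [<-|Hw] Hyw; [|exact (Hl2 w Hw Hyw)].
      assert (Hy21 : class_size rho y2 s1).
      { apply class_size_resp with y1; auto. rewrite Hz, Hyw. reflexivity. }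
      pose proof (class_size_unique rho y2 s1 s2 Hy21 Hy2). lia.
    + exists y1, s1. repeat split; auto. intros w [<-|Hw]; auto.
Qed.

End OneClassEachSize.

(* A position of the Ehrenfeucht-Fraisse game of [T] rounds: the first [n] entries of [e]
   and [f] satisfy the same equalities and relations, and corresponding entries have
   classes of the same size, counted up to [T]. *)
Record truncated_iso {X Y : Type} (rho : X -> X -> Prop) (sigma : Y -> Y -> Prop)
  (T n : nat) (e : nat -> X) (f : nat -> Y) : Prop := {
  ti_eq : forall i j, i < n -> j < n -> (e i = e j <-> f i = f j);
  ti_rel : forall i j, i < n -> j < n -> (rho (e i) (e j) <-> sigma (f i) (f j));
  ti_size : forall i m, i < n -> m <= T ->
    (class_ge rho (e i) m <-> class_ge sigma (f i) m) }.
Arguments ti_eq {X Y rho sigma T n e f}.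
Arguments ti_rel {X Y rho sigma T n e f}.
Arguments ti_size {X Y rho sigma T n e f}.

Lemma truncated_iso_sym {X Y : Type} (rho : X -> X -> Prop) (sigma : Y -> Y -> Prop)
  T n e f : truncated_iso rho sigma T n e f -> truncated_iso sigma rho T n f e.
Proof.
  intros Hiso. split; intros; symmetry;
    [apply (ti_eq Hiso)|apply (ti_rel Hiso)|apply (ti_size Hiso)]; auto.
Qed.

Section ForthStep.
Context {X Y : Type} (rho : X -> X -> Prop) (sigma : Y -> Y -> Prop)
  `{Equivalence X rho} `{Equivalence Y sigma}.

Lemma truncated_iso_cons T n e f x y :
  truncated_iso rho sigma T n e f ->
  (forall j, j < n -> (e j = x <-> f j = y)) ->
  (forall j, j < n -> (rho (e j) x <-> sigma (f j) y)) ->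
  (forall m, m <= T -> (class_ge rho x m <-> class_ge sigma y m)) ->
  truncated_iso rho sigma T (S n) (scons x e) (scons y f).
Proof.
  intros Hiso Heq Hrel Hsize. split.
  - intros [|i] [|j] Hi Hj; cbn; [tauto| | |apply (ti_eq Hiso); lia].
    + split; intros Hq; symmetry; apply (Heq j); auto; lia.
    + apply Heq. lia.
  - intros [|i] [|j] Hi Hj; cbn; [split; reflexivity| | |apply (ti_rel Hiso); lia].
    + split; intros Hr; symmetry; apply (Hrel j); try lia; symmetry; auto.
    + apply Hrel. lia.
  - intros [|i] m Hi Hm; cbn; [apply Hsize|apply (ti_size Hiso)]; lia.
Qed.

Lemma fresh_in_class T n e f i x :
  truncated_iso rho sigma T n e f -> n < T -> i < n ->
  rho (e i) x -> (forall j, j < n -> e j <> x) ->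
  exists y, sigma (f i) y /\ forall j, j < n -> f j <> y.
Proof.
  intros Hiso HnT Hi Hix Hx. apply NNPP. intros Hno.
  assert (Hcover : forall y, sigma (f i) y -> In y (map f (seq 0 n))).
  { intros y Hy. apply in_map_seq. apply NNPP. intros Hy'.
    apply Hno. exists y. split; auto. intros j Hj <-. eauto. }
  destruct (class_size_of_cover sigma (f i) _ Hcover) as [s [Hs Hsize]].
  rewrite length_map, length_seq in Hs.
  destruct Hsize as [l [Hnd [Hlen Hl]]].
  destruct (map_indices f n l) as [js [Hjs Hjsn]].
  { intros y Hy. apply in_map_seq, Hcover, Hl, Hy. }
  assert (Hge : class_ge rho (e i) (S s)).
  { exists (x :: map e js). split; [|split].
    - constructor.
      + rewrite in_map_iff. intros [j [Hj Hin]]. exact (Hx j (Hjsn j Hin) Hj).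
      + apply NoDup_map_transfer with f; [|congruence].
        intros j j' Hj Hj'. apply (ti_eq Hiso); auto.
    - simpl. rewrite length_map, <- Hlen, <- Hjs, length_map. reflexivity.
    - intros z [<-|Hz]; auto. apply in_map_iff in Hz. destruct Hz as [j [<- Hj]].
      apply (ti_rel Hiso); auto. apply Hl. rewrite <- Hjs. apply in_map, Hj. }
  apply (ti_size Hiso i (S s) Hi ltac:(lia)) in Hge.
  assert (Hsize : class_size sigma (f i) s) by (exists l; auto).
  apply (class_size_ge sigma (f i) s (S s) Hsize) in Hge. lia.
Qed.

Context (one_rho : one_class_each_size rho) (one_sigma : one_class_each_size sigma)
  (singletons_sigma : inf_many_singletons sigma).

(* Class sizes [>= T] are indistinguishable at this depth, so a large enough class avoiding
   the current elements answers such a class; smaller sizes are matched exactly. *)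
Lemma fresh_class_answer T n e f x :
  truncated_iso rho sigma T n e f -> (forall j, j < n -> ~ rho (e j) x) ->
  exists y, (forall j, j < n -> ~ sigma (f j) y) /\
    forall m, m <= T -> (class_ge rho x m <-> class_ge sigma y m).
Proof.
  intros Hiso Hx. destruct (class_ge_or_size rho x T) as [HT|[m [HmT Hm]]].
  - destruct (large_class_avoiding sigma one_sigma (map f (seq 0 n)) T)
      as [y [s [Hs [Hy Hfar]]]].
    exists y. split.
    + intros j Hj Hr. apply (Hfar (f j)); [apply in_map_seq; eauto|symmetry; auto].
    + intros m Hm. split; intros _; [apply (class_size_ge sigma y s m Hy); lia|].
      apply class_ge_le with T; auto.
  - pose proof (class_size_pos rho x m Hm).
    destruct (Nat.eq_dec m 1) as [->|Hm1].
    + assert (Hy : exists y, singleton sigma y /\ ~ In y (map f (seq 0 n))).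
      { apply NNPP. intros Hno. apply singletons_sigma. exists (map f (seq 0 n)).
        intros y Hy. apply NNPP. intros Hin. apply Hno. exists y. split; auto. }
      destruct Hy as [y [Hy Hyn]]. exists y. split.
      * intros j Hj Hr. apply Hyn, in_map_seq. exists j. split; auto.
        apply Hy. symmetry. auto.
      * intros k _. apply class_size_same_ge with 1; auto.
        apply singleton_iff_size_1; auto.
    + destruct (one_sigma m) as [y [Hy _]]; [lia|]. exists y. split.
      * intros j Hj Hr. apply (Hx j Hj).
        assert (Hfj : class_size sigma (f j) m) by (apply (class_size_resp sigma y); auto; symmetry; auto).
        apply (class_size_related rho one_rho m); [lia| |auto].
        apply (class_size_transfer rho sigma (e j) (f j) T m); auto.
        intros k Hk. apply (ti_size Hiso); auto.
      * intros k _. apply class_size_same_ge with m; auto.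
Qed.

Lemma forth T n e f : truncated_iso rho sigma T n e f -> n < T -> forall x,
  exists y, truncated_iso rho sigma T (S n) (scons x e) (scons y f).
Proof.
  intros Hiso HnT x.
  destruct (classic (exists j, j < n /\ e j = x)) as [[j [Hj <-]]|Hold].
  { exists (f j). apply truncated_iso_cons; auto; intros;
      [apply (ti_eq Hiso)|apply (ti_rel Hiso)|apply (ti_size Hiso)]; auto. }
  assert (Hx : forall j, j < n -> e j <> x) by eauto.
  destruct (classic (exists i, i < n /\ rho (e i) x)) as [[i [Hi Hix]]|Hnew].
  - destruct (fresh_in_class T n e f i x Hiso HnT Hi Hix Hx) as [y [Hiy Hy]].
    exists y. apply truncated_iso_cons; auto.
    + intros j Hj. split; intros Heq; exfalso; [exact (Hx j Hj Heq)|exact (Hy j Hj Heq)].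
    + intros j Hj. rewrite <- Hix, <- Hiy. apply (ti_rel Hiso); auto.
    + intros m Hm. split; intros Hge.
      * apply (class_ge_resp sigma (f i)); auto. apply (ti_size Hiso); auto.
        apply (class_ge_resp rho x); auto. symmetry; auto.
      * apply (class_ge_resp rho (e i)); auto. apply (ti_size Hiso); auto.
        apply (class_ge_resp sigma y); auto. symmetry; auto.
  - assert (Hxn : forall j, j < n -> ~ rho (e j) x) by eauto.
    destruct (fresh_class_answer T n e f x Hiso Hxn) as [y [Hy Hsize]].
    exists y. apply truncated_iso_cons; auto.
    + intros j Hj. split; intros Heq; exfalso;
        [apply (Hxn j Hj)|apply (Hy j Hj)]; rewrite Heq; reflexivity.
    + intros j Hj. split; intros Hr; exfalso; [exact (Hxn j Hj Hr)|exact (Hy j Hj Hr)].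
Qed.

End ForthStep.

Fixpoint quant_depth (p : form) : nat :=
  match p with
  | FRel _ _ | FEq _ _ => 0
  | FNeg q => quant_depth q
  | FAnd q r => Nat.max (quant_depth q) (quant_depth r)
  | FEx q => S (quant_depth q)
  end.

Section ElementaryEquivalence.
Context {X Y : Type} (rho : X -> X -> Prop) (sigma : Y -> Y -> Prop)
  `{Equivalence X rho} `{Equivalence Y sigma}
  (one_rho : one_class_each_size rho) (one_sigma : one_class_each_size sigma)
  (singletons_rho : inf_many_singletons rho) (singletons_sigma : inf_many_singletons sigma).

Lemma sat_truncated_iso T : forall p n e f,
  closed_at n p -> n + quant_depth p <= T -> truncated_iso rho sigma T n e f ->
  (sat rho e p <-> sat sigma f p).
Proof.
  induction p as [i j|i j|q IH|q IHq r IHr|q IH]; intros n e f Hc Hd Hiso; cbn in *.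
  - apply (ti_rel Hiso); tauto.
  - apply (ti_eq Hiso); tauto.
  - rewrite (IH n e f); tauto.
  - rewrite (IHq n e f), (IHr n e f); try tauto; lia.
  - split.
    + intros [x Hx]. destruct (forth rho sigma one_rho one_sigma singletons_sigma
        T n e f Hiso ltac:(lia) x) as [y Hy].
      exists y. apply (IH (S n) _ _ Hc ltac:(lia) Hy), Hx.
    + intros [y Hy]. destruct (forth sigma rho one_sigma one_rho singletons_rho
        T n f e (truncated_iso_sym _ _ _ _ _ _ Hiso) ltac:(lia) y) as [x Hx].
      exists x. apply (IH (S n) _ _ Hc ltac:(lia) (truncated_iso_sym _ _ _ _ _ _ Hx)), Hy.
Qed.

Lemma elem_equiv_of_class_sizes : elem_equiv rho sigma.
Proof.
  intros p Hp.
  assert (Hnil : forall e f, truncated_iso rho sigma (quant_depth p) 0 e f)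
    by (intros e f; split; intros; lia).
  destruct (infinite_inhabited _ singletons_rho) as [x0].
  destruct (infinite_inhabited _ singletons_sigma) as [y0].
  split; intros Hmodels e.
  - apply (sat_truncated_iso (quant_depth p) p 0 (fun _ => x0) e Hp ltac:(lia) (Hnil _ _)), Hmodels.
  - apply (sat_truncated_iso (quant_depth p) p 0 e (fun _ => y0) Hp ltac:(lia) (Hnil _ _)), Hmodels.
Qed.

End ElementaryEquivalence.

Record bij_rel {A B : Type} (P : A -> Prop) (Q : B -> Prop) (R : A -> B -> Prop) : Prop := {
  bij_rel_dom : forall a b, R a b -> P a /\ Q b;
  bij_rel_total : forall a, P a -> exists b, R a b;
  bij_rel_onto : forall b, Q b -> exists a, R a b;
  bij_rel_functional : forall a b b', R a b -> R a b' -> b = b';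
  bij_rel_injective : forall a a' b, R a b -> R a' b -> a = a' }.
Arguments bij_rel_dom {A B P Q R}.
Arguments bij_rel_total {A B P Q R}.
Arguments bij_rel_onto {A B P Q R}.
Arguments bij_rel_functional {A B P Q R}.
Arguments bij_rel_injective {A B P Q R}.

Section BijRel.
Context {A B C : Type}.

Lemma bij_rel_inv (P : A -> Prop) (Q : B -> Prop) R :
  bij_rel P Q R -> bij_rel Q P (fun b a => R a b).
Proof.
  intros HR. split; intros.
  - apply and_comm, (bij_rel_dom HR); auto.
  - apply (bij_rel_onto HR); auto.
  - apply (bij_rel_total HR); auto.
  - eapply (bij_rel_injective HR); eauto.
  - eapply (bij_rel_functional HR); eauto.
Qed.

Lemma bij_rel_comp (P : A -> Prop) (Q : B -> Prop) (S : C -> Prop) R R' :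
  bij_rel P Q R -> bij_rel Q S R' -> bij_rel P S (fun a c => exists b, R a b /\ R' b c).
Proof.
  intros HR HR'. split.
  - intros a c [b [Hab Hbc]].
    exact (conj (proj1 (bij_rel_dom HR _ _ Hab)) (proj2 (bij_rel_dom HR' _ _ Hbc))).
  - intros a Ha. destruct (bij_rel_total HR a Ha) as [b Hab].
    destruct (bij_rel_total HR' b (proj2 (bij_rel_dom HR _ _ Hab))) as [c Hbc]. eauto.
  - intros c Hc. destruct (bij_rel_onto HR' c Hc) as [b Hbc].
    destruct (bij_rel_onto HR b (proj1 (bij_rel_dom HR' _ _ Hbc))) as [a Hab]. eauto.
  - intros a c c' [b [Hab Hbc]] [b' [Hab' Hbc']].
    rewrite (bij_rel_functional HR a b b') in Hbc; auto.
    exact (bij_rel_functional HR' _ _ _ Hbc Hbc').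
  - intros a a' c [b [Hab Hbc]] [b' [Hab' Hbc']].
    rewrite (bij_rel_injective HR' b b' c) in Hab; auto.
    exact (bij_rel_injective HR _ _ _ Hab Hab').
Qed.

Lemma bij_rel_ext (P P' : A -> Prop) (Q Q' : B -> Prop) R :
  (forall a, P a <-> P' a) -> (forall b, Q b <-> Q' b) -> bij_rel P Q R -> bij_rel P' Q' R.
Proof.
  intros HP HQ HR. split; intros.
  - rewrite <- HP, <- HQ. apply (bij_rel_dom HR); auto.
  - apply (bij_rel_total HR), HP; auto.
  - apply (bij_rel_onto HR), HQ; auto.
  - eapply (bij_rel_functional HR); eauto.
  - eapply (bij_rel_injective HR); eauto.
Qed.

Lemma bij_rel_lists (l1 : list A) (l2 : list B) :
  NoDup l1 -> NoDup l2 -> length l1 = length l2 ->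
  bij_rel (fun a => In a l1) (fun b => In b l2)
    (fun a b => exists j, nth_error l1 j = Some a /\ nth_error l2 j = Some b).
Proof.
  intros Hnd1 Hnd2 Hlen.
  assert (Hsome : forall j, nth_error l1 j <> None <-> nth_error l2 j <> None).
  { intros j. rewrite !nth_error_Some. lia. }
  split.
  - intros a b [j [Ha Hb]]. split; eapply nth_error_In; eauto.
  - intros a Ha. destruct (In_nth_error _ _ Ha) as [j Hj].
    destruct (nth_error l2 j) as [b|] eqn:Hb; [eauto|].
    exfalso. apply (proj1 (Hsome j)); congruence.
  - intros b Hb. destruct (In_nth_error _ _ Hb) as [j Hj].
    destruct (nth_error l1 j) as [a|] eqn:Ha; [eauto|].
    exfalso. apply (proj2 (Hsome j)); congruence.
  - intros a b b' [j [Ha Hb]] [j' [Ha' Hb']].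
    assert (j = j') as <- by (apply (proj1 (NoDup_nth_error l1) Hnd1);
      [apply nth_error_Some; congruence|congruence]).
    congruence.
  - intros a a' b [j [Ha Hb]] [j' [Ha' Hb']].
    assert (j = j') as <- by (apply (proj1 (NoDup_nth_error l2) Hnd2);
      [apply nth_error_Some; congruence|congruence]).
    congruence.
Qed.

Lemma bij_rel_bigunion (P : nat -> A -> Prop) (Q : nat -> B -> Prop)
  (R : nat -> A -> B -> Prop) :
  (forall k, bij_rel (P k) (Q k) (R k)) ->
  (forall k k' a, P k a -> P k' a -> k = k') -> (forall k k' b, Q k b -> Q k' b -> k = k') ->
  bij_rel (fun a => exists k, P k a) (fun b => exists k, Q k b) (fun a b => exists k, R k a b).
Proof.
  intros HR HP HQ. split.
  - intros a b [k Hab]. destruct (bij_rel_dom (HR k) a b Hab). eauto.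
  - intros a [k Ha]. destruct (bij_rel_total (HR k) a Ha). eauto.
  - intros b [k Hb]. destruct (bij_rel_onto (HR k) b Hb). eauto.
  - intros a b b' [k Hab] [k' Hab'].
    assert (k = k') as <- by (apply (HP k k' a);
      [apply (bij_rel_dom (HR k) a b)|apply (bij_rel_dom (HR k') a b')]; auto).
    exact (bij_rel_functional (HR k) _ _ _ Hab Hab').
  - intros a a' b [k Hab] [k' Ha'b].
    assert (k = k') as <- by (apply (HQ k k' b);
      [apply (bij_rel_dom (HR k) a b)|apply (bij_rel_dom (HR k') a' b)]; auto).
    exact (bij_rel_injective (HR k) _ _ _ Hab Ha'b).
Qed.

Lemma bij_rel_full_function (P : A -> Prop) (Q : B -> Prop) R :
  bij_rel P Q R -> (forall a, P a) -> (forall b, Q b) ->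
  exists F : A -> B, (forall a a', F a = F a' -> a = a') /\ (forall b, exists a, F a = b) /\
    forall a, R a (F a).
Proof.
  intros HR HP HQ.
  destruct (choice R (fun a => bij_rel_total HR a (HP a))) as [F HF].
  exists F. split; [|split; [|exact HF]].
  - intros a a' Heq. apply (bij_rel_injective HR a a' (F a)); [|rewrite Heq]; apply HF.
  - intros b. destruct (bij_rel_onto HR b (HQ b)) as [a Hab].
    exists a. exact (bij_rel_functional HR a _ _ (HF a) Hab).
Qed.

End BijRel.

Fixpoint count_below (D : nat -> Prop) (c : nat) : nat :=
  match c with
  | 0 => 0
  | S c => (if excluded_middle_informative (D c) then 1 else 0) + count_below D c
  end.

Lemma count_below_in (D : nat -> Prop) c : D c -> count_below D (S c) = S (count_below D c).
Proof. intros Hc. cbn. destruct excluded_middle_informative; [reflexivity|contradiction]. Qed.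

Lemma count_below_mono (D : nat -> Prop) c c' : c <= c' -> count_below D c <= count_below D c'.
Proof. induction 1 as [|c' _ IH]; auto. cbn. lia. Qed.

Lemma count_below_hit (D : nat -> Prop) c k :
  k < count_below D c -> exists c', c' < c /\ D c' /\ count_below D c' = k.
Proof.
  induction c as [|c IH]; cbn; [lia|].
  destruct excluded_middle_informative as [Hc|Hc]; intros Hk.
  - destruct (Nat.eq_dec k (count_below D c)) as [->|Hne]; [exists c; auto|].
    destruct IH as [c' ?]; [lia|]. exists c'. intuition lia.
  - destruct IH as [c' ?]; [lia|]. exists c'. intuition lia.
Qed.

Lemma count_below_unbounded (D : nat -> Prop) :
  (forall N, exists c, N <= c /\ D c) -> forall k, exists c, k < count_below D c.
Proof.
  intros HD k. induction k as [|k [c Hc]].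
  - destruct (HD 0) as [c [_ Hc]]. exists (S c). rewrite count_below_in; auto. lia.
  - destruct (HD c) as [c' [Hcc' Hc']]. exists (S c').
    rewrite count_below_in; auto. pose proof (count_below_mono D c c' Hcc'). lia.
Qed.

Lemma injective_preimage_finite {A : Type} (g : A -> nat) (P : A -> Prop) :
  (forall x y, g x = g y -> x = y) ->
  forall N, exists l, forall x, P x -> g x < N -> In x l.
Proof.
  intros Hg N. induction N as [|N [l Hl]]; [exists []; intros; lia|].
  destruct (classic (exists x, P x /\ g x = N)) as [[x0 [_ Hx0]]|Hnone].
  - exists (x0 :: l). intros x Hx HxN.
    destruct (Nat.eq_dec (g x) N); [left; apply Hg; congruence|right; apply Hl; auto; lia].
  - exists l. intros x Hx HxN.
    destruct (Nat.eq_dec (g x) N); [exfalso; eauto|apply Hl; auto; lia].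
Qed.

(* Enumerate [P] in increasing order of the code [g x]: [x] gets index [k] when exactly
   [k] codes of elements of [P] lie below [g x]. *)
Lemma bij_rel_nat_infinite {A : Type} (P : A -> Prop) :
  countable A -> infinite P -> exists R, bij_rel (fun _ : nat => True) P R.
Proof.
  intros [g Hg] Hinf.
  set (D := fun c => exists x, P x /\ g x = c).
  assert (HD : forall N, exists c, N <= c /\ D c).
  { intros N. apply NNPP. intros Hno. apply Hinf.
    destruct (injective_preimage_finite g P Hg N) as [l Hl]. exists l.
    intros x Hx. apply Hl; auto. apply NNPP. intros HxN.
    apply Hno. exists (g x). split; [lia|exists x; auto]. }
  exists (fun k x => P x /\ count_below D (g x) = k). split.
  - intros k x [Hx _]. auto.
  - intros k _. destruct (count_below_unbounded D HD k) as [c Hc].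
    destruct (count_below_hit D c k Hc) as [c' [_ [[x [Hx <-]] Hk]]]. eauto.
  - intros x Hx. eauto.
  - intros k x x' [Hx Hk] [Hx' Hk'].
    assert (Hlt : forall a b, P a -> g a < g b -> count_below D (g a) < count_below D (g b)).
    { intros a b Ha Hab. pose proof (count_below_mono D (S (g a)) (g b) Hab) as Hmono.
      rewrite count_below_in in Hmono by (exists a; auto). lia. }
    destruct (Nat.lt_trichotomy (g x) (g x')) as [Hxx'|[Hxx'|Hxx']];
      [pose proof (Hlt x x' Hx Hxx')|apply Hg; auto|pose proof (Hlt x' x Hx' Hxx')]; lia.
  - intros k k' x [_ Hk] [_ Hk']. congruence.
Qed.

Lemma bij_rel_countable_infinite {A B : Type} (P : A -> Prop) (Q : B -> Prop) :
  countable A -> countable B -> infinite P -> infinite Q -> exists R, bij_rel P Q R.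
Proof.
  intros HA HB HP HQ.
  destruct (bij_rel_nat_infinite P HA HP) as [R1 HR1].
  destruct (bij_rel_nat_infinite Q HB HQ) as [R2 HR2].
  eexists. exact (bij_rel_comp _ _ _ _ _ (bij_rel_inv _ _ _ HR1) HR2).
Qed.
(* A condensation may merge classes, so it suffices to biject matching blocks, provided
   each source block either consists of singletons or is sent into a single class. *)
Lemma condenses_by_blocks {U V : Type} (rho : U -> U -> Prop) (sigma : V -> V -> Prop)
  `{Reflexive V sigma} (P : nat -> U -> Prop) (Q : nat -> V -> Prop) :
  (forall u, exists k, P k u) -> (forall v, exists k, Q k v) ->
  (forall k k' u, P k u -> P k' u -> k = k') -> (forall k k' v, Q k v -> Q k' v -> k = k') ->
  (forall k, exists R, bij_rel (P k) (Q k) R) ->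
  (forall k u u', P k u -> rho u u' -> P k u') ->
  (forall k, (forall u u', P k u -> rho u u' -> u' = u) \/
             (forall v v', Q k v -> Q k v' -> sigma v v')) ->
  condenses rho sigma.
Proof.
  intros HPcov HQcov HPdisj HQdisj Hbij Hclosed Hblock.
  destruct (choice (fun k R => bij_rel (P k) (Q k) R) Hbij) as [R HR].
  destruct (bij_rel_full_function _ _ _ (bij_rel_bigunion P Q R HR HPdisj HQdisj) HPcov HQcov)
    as [F [Hinj [Honto HF]]].
  exists F. split; [exact Hinj|split; [exact Honto|]].
  intros u u' Hu. destruct (HF u) as [k Hk], (HF u') as [k' Hk'].
  destruct (bij_rel_dom (HR k) _ _ Hk) as [HPu HQu].
  destruct (bij_rel_dom (HR k') _ _ Hk') as [HPu' HQu'].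
  assert (k' = k) as -> by exact (HPdisj k' k u' HPu' (Hclosed k u u' HPu Hu)).
  destruct (Hblock k) as [Hsing|Hone].
  - rewrite (Hsing u u' HPu Hu). reflexivity.
  - apply Hone; auto.
Qed.

Definition class_block {X : Type} (rho : X -> X -> Prop) (Inf Sing : X -> Prop)
  (k : nat) (x : X) : Prop :=
  match k with
  | 0 => Inf x
  | 1 => Sing x
  | _ => class_size rho x k
  end.

Section ClassBlocks.
Context {X : Type} (rho : X -> X -> Prop) (Inf Sing : X -> Prop).

Lemma class_block_cover (x : X) :
  Inf x \/ Sing x \/ (exists n, 2 <= n /\ class_size rho x n) ->
  exists k, class_block rho Inf Sing k x.
Proof.
  intros [Hx|[Hx|[[|[|n]] [Hn Hx]]]]; try lia; [exists 0|exists 1|exists (S (S n))]; auto.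
Qed.

Lemma class_block_unique (x : X) k k' :
  (forall x, Inf x -> ~ Sing x) ->
  (forall x n, 2 <= n -> class_size rho x n -> ~ Inf x /\ ~ Sing x) ->
  class_block rho Inf Sing k x -> class_block rho Inf Sing k' x -> k = k'.
Proof.
  intros HIS Hfin Hk Hk'.
  assert (Hsize : forall n, class_block rho Inf Sing (S (S n)) x -> ~ Inf x /\ ~ Sing x)
    by (intros n Hn; apply (Hfin x (S (S n))); [lia|exact Hn]).
  destruct k as [|[|k]], k' as [|[|k']]; cbn in Hk, Hk'; auto;
    try solve [exfalso; eapply HIS; eauto
              | destruct (Hsize _ Hk); contradiction
              | destruct (Hsize _ Hk'); contradiction].
  apply (class_size_unique rho x); auto.
Qed.

End ClassBlocks.

Section StandardBlocks.
Context {X : Type} (rho : X -> X -> Prop) `{Equivalence X rho}.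

Lemma infinite_class_not_singleton (x : X) : infinite_class rho x -> ~ singleton rho x.
Proof.
  intros Hinf Hs. apply (infinite_class_not_size rho x 1 Hinf), singleton_iff_size_1; auto.
Qed.

Lemma class_size_not_singleton (x : X) n : 2 <= n -> class_size rho x n -> ~ singleton rho x.
Proof.
  intros Hn Hx Hs. apply singleton_iff_size_1 in Hs; auto.
  pose proof (class_size_unique rho x n 1 Hx Hs). lia.
Qed.

Lemma infinite_infinite_classes (x : X) :
  infinite_class rho x -> infinite (infinite_class rho).
Proof.
  intros Hx. apply (infinite_mono (rho x)); [|exact Hx].
  intros y Hxy. exact (infinite_class_resp rho x y Hxy Hx).
Qed.

End StandardBlocks.

Lemma condenses_onto_partition {U V : Type} (rho : U -> U -> Prop) (sigma : V -> V -> Prop)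
  `{Equivalence U rho} `{Equivalence V sigma} (IV SV : V -> Prop) :
  countable U -> countable V ->
  one_class_each_size rho -> one_class_each_size sigma ->
  inf_many_singletons rho -> infinite (infinite_class rho) ->
  infinite IV -> infinite SV -> (forall v v', IV v -> IV v' -> sigma v v') ->
  (forall v, IV v \/ SV v \/ exists n, 2 <= n /\ class_size sigma v n) ->
  (forall v, IV v -> ~ SV v) ->
  (forall v n, 2 <= n -> class_size sigma v n -> ~ IV v /\ ~ SV v) ->
  condenses rho sigma.
Proof.
  intros HU HV one_rho one_sigma Hsing Hinf HIV HSV Hone_IV Hcov HIS Hfin.
  apply (condenses_by_blocks rho sigma
           (class_block rho (infinite_class rho) (singleton rho)) (class_block sigma IV SV)).
  - intros u. apply class_block_cover. exact (class_trichotomy rho u).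
  - intros v. apply class_block_cover, Hcov.
  - intros k k' u. apply class_block_unique; [apply infinite_class_not_singleton; auto|].
    intros x n Hn Hx. split; [intros Hi; exact (infinite_class_not_size rho x n Hi Hx)|].
    exact (class_size_not_singleton rho x n Hn Hx).
  - intros k k' v. apply class_block_unique; auto.
  - intros [|[|k]]; cbn.
    + apply bij_rel_countable_infinite; auto.
    + apply bij_rel_countable_infinite; auto.
    + destruct (class_of_size_list rho one_rho (S (S k))) as [l1 [Hnd1 [Hlen1 Hl1]]]; [lia|].
      destruct (class_of_size_list sigma one_sigma (S (S k))) as [l2 [Hnd2 [Hlen2 Hl2]]]; [lia|].
      eexists. apply (bij_rel_ext (fun a => In a l1) _ (fun b => In b l2));
        [intros u; symmetry; apply Hl1|intros v; symmetry; apply Hl2|].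
      apply bij_rel_lists; congruence.
  - intros [|[|k]] u u' Hu Huu'; cbn in *.
    + exact (infinite_class_resp rho u u' Huu' Hu).
    + rewrite (Hu u' Huu'). exact Hu.
    + exact (class_size_resp rho u u' _ Huu' Hu).
  - intros [|[|k]]; cbn; [right; exact Hone_IV|left; auto|right].
    intros v v'. apply class_size_related; auto. lia.
Qed.

Definition iand (p q : iform) : iform := IConj bool (fun b => if b then p else q).

(* [distinct_in_class m c d]: there are [m] pairwise distinct elements in the class of
   variable [c], all different from variables [0 .. d-1]; each new witness becomes
   variable 0, which shifts [c] and [d] and excludes it in the recursive call. *)
Fixpoint distinct_in_class (m c d : nat) : iform :=
  match m with
  | 0 => IConj Empty_set (fun v => match v with end)
  | S m => IEx (iand (IRel (S c) 0)
             (iand (IConj {i : nat | i < d} (fun i => INeg (IEq 0 (S (proj1_sig i)))))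
                   (distinct_in_class m (S c) (S d))))
  end.

Lemma distinct_in_class_closed m : forall c d n, c < n -> d <= n ->
  iclosed_at n (distinct_in_class m c d).
Proof.
  induction m as [|m IH]; intros c d n Hc Hd; cbn; [intros []|].
  intros [|]; cbn; [lia|]. intros [|]; cbn; [|apply IH; lia].
  intros [i Hi]. cbn. lia.
Qed.

Lemma isat_distinct_in_class {X : Type} (rho : X -> X -> Prop) m : forall c d e,
  isat rho e (distinct_in_class m c d) <->
  exists l, NoDup l /\ length l = m /\
    forall z, In z l -> rho (e c) z /\ forall i, i < d -> z <> e i.
Proof.
  induction m as [|m IH]; intros c d e; cbn.
  - split; [|intros _ []]. intros _. exists [].
    split; [constructor|split; [reflexivity|intros z []]].
  - split.
    + intros [x Hx]. pose proof (Hx true) as Hxc. pose proof (Hx false) as Hrest.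
      cbn in Hxc, Hrest. pose proof (Hrest true) as Hxd. pose proof (Hrest false) as Hl.
      cbn in Hxd, Hl. apply IH in Hl. destruct Hl as [l [Hnd [Hlen Hl]]].
      exists (x :: l). split; [|split; [cbn; auto|]].
      * constructor; auto. intros Hin. apply (proj2 (Hl x Hin) 0); auto. lia.
      * intros z [<-|Hz].
        -- split; auto. intros i Hi. exact (Hxd (exist _ i Hi)).
        -- destruct (Hl z Hz) as [Hrz Hne]. split; auto.
           intros i Hi. apply (Hne (S i)). lia.
    + intros [[|x l] [Hnd [Hlen Hl]]]; [discriminate|].
      inversion Hnd as [|? ? Hxl Hnd']; subst. exists x. intros [|]; cbn.
      * apply (Hl x); cbn; auto.
      * intros [|]; cbn.
        -- intros [i Hi]. apply (Hl x); cbn; auto.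
        -- apply IH. exists l. repeat split; auto.
           ++ apply (Hl z); cbn; auto.
           ++ intros [|i] Hi; cbn; [intros ->; contradiction|].
              apply (Hl z); cbn; auto. lia.
Qed.

Definition infinite_class_formula (c : nat) : iform :=
  IConj nat (fun m => distinct_in_class m c 0).

Lemma isat_infinite_class_formula {X : Type} (rho : X -> X -> Prop) c e :
  isat rho e (infinite_class_formula c) <-> infinite_class rho (e c).
Proof.
  rewrite infinite_class_iff_ge. cbn. split; intros Hm m; specialize (Hm m).
  - apply isat_distinct_in_class in Hm. destruct Hm as [l [Hnd [Hlen Hl]]].
    exists l. repeat split; auto. intros z Hz. apply Hl, Hz.
  - apply isat_distinct_in_class. destruct Hm as [l [Hnd [Hlen Hl]]].
    exists l. repeat split; auto. lia.
Qed.

Definition two_infinite_classes_sentence : iform :=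
  IEx (IEx (iand (INeg (IRel 0 1))
                 (iand (infinite_class_formula 0) (infinite_class_formula 1)))).

Lemma two_infinite_classes_isentence : isentence two_infinite_classes_sentence.
Proof.
  intros [|]; cbn; [lia|].
  intros [|] m; apply distinct_in_class_closed; lia.
Qed.

Lemma isat_iand {X : Type} (rho : X -> X -> Prop) e p q :
  isat rho e (iand p q) <-> isat rho e p /\ isat rho e q.
Proof. split; [intros Hpq; exact (conj (Hpq true) (Hpq false))|intros [Hp Hq] []; auto]. Qed.

Lemma imodels_two_infinite_classes {X : Type} (rho : X -> X -> Prop) :
  inhabited X ->
  (imodels rho two_infinite_classes_sentence <->
   exists x1 x2, ~ rho x1 x2 /\ infinite_class rho x1 /\ infinite_class rho x2).
Proof.
  intros [x0]. unfold imodels, two_infinite_classes_sentence. cbn [isat].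
  repeat setoid_rewrite isat_iand. setoid_rewrite isat_infinite_class_formula. cbn.
  split.
  - intros Hmodels. destruct (Hmodels (fun _ => x0)) as [x2 [x1 Hx]]. eauto.
  - intros [x1 [x2 Hx]] e. eauto.
Qed.

Lemma not_linf_equiv_one_two_infinite_classes {X Y : Type}
  (rho : X -> X -> Prop) (sigma : Y -> Y -> Prop) `{Equivalence X rho} :
  exactly_one_infinite_class rho -> exactly_two_infinite_classes sigma ->
  ~ linf_equiv rho sigma.
Proof.
  intros [x [Hx Hxu]] [y1 [y2 [Hy1 [Hy2 [Hy12 _]]]]] Hequiv.
  assert (HY : imodels sigma two_infinite_classes_sentence).
  { apply imodels_two_infinite_classes; [exact (inhabits y1)|]. exists y1, y2. auto. }
  apply (Hequiv _ two_infinite_classes_isentence), imodels_two_infinite_classes in HY;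
    [|exact (inhabits x)].
  destruct HY as [x1 [x2 [Hr [Hinf1 Hinf2]]]].
  apply Hr. transitivity x; [symmetry|]; auto.
Qed.

Section OneAndTwoInfiniteClasses.
Context {X Y : Type} (rho : X -> X -> Prop) (sigma : Y -> Y -> Prop)
  `{Equivalence X rho} `{Equivalence Y sigma}
  (countable_X : countable X) (countable_Y : countable Y)
  (singletons_rho : inf_many_singletons rho) (singletons_sigma : inf_many_singletons sigma)
  (one_rho : one_class_each_size rho) (one_sigma : one_class_each_size sigma)
  (one_infinite : exactly_one_infinite_class rho)
  (two_infinite : exactly_two_infinite_classes sigma).

Lemma condenses_one_into_two_infinite_classes : condenses rho sigma.
Proof.
  destruct one_infinite as [x [Hx _]].
  destruct two_infinite as [y1 [y2 [Hy1 [Hy2 [Hy12 Hy]]]]].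
  apply (condenses_onto_partition rho sigma (sigma y1) (fun y => singleton sigma y \/ sigma y2 y));
    auto.
  - exact (infinite_infinite_classes rho x Hx).
  - apply (infinite_mono (singleton sigma)); auto.
  - intros v v' Hv Hv'. rewrite <- Hv. exact Hv'.
  - intros v. destruct (class_trichotomy sigma v) as [Hinf|[Hs|Hfin]]; auto.
    destruct (Hy v Hinf); auto.
  - intros v Hv [Hs|Hv2].
    + exact (infinite_class_not_singleton sigma v (infinite_class_resp sigma y1 v Hv Hy1) Hs).
    + apply Hy12. rewrite Hv, Hv2. reflexivity.
  - intros v n Hn Hv. split; [|intros [Hs|Hv2]].
    + intros Hv1. exact (infinite_class_not_size sigma v n (infinite_class_resp sigma y1 v Hv1 Hy1) Hv).
    + exact (class_size_not_singleton sigma v n Hn Hv Hs).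
    + exact (infinite_class_not_size sigma v n (infinite_class_resp sigma y2 v Hv2 Hy2) Hv).
Qed.

Lemma condenses_two_into_one_infinite_class : condenses sigma rho.
Proof.
  destruct one_infinite as [x [Hx Hxu]].
  destruct two_infinite as [y1 [_ [Hy1 _]]].
  apply (condenses_onto_partition sigma rho (infinite_class rho) (singleton rho)); auto.
  - exact (infinite_infinite_classes sigma y1 Hy1).
  - exact (infinite_infinite_classes rho x Hx).
  - intros u u' Hu Hu'. rewrite <- (Hxu u Hu). exact (Hxu u' Hu').
  - exact (class_trichotomy rho).
  - exact (infinite_class_not_singleton rho).
  - intros u n Hn Hu. split; [intros Hinf; exact (infinite_class_not_size rho u n Hinf Hu)|].
    exact (class_size_not_singleton rho u n Hn Hu).
Qed.

End OneAndTwoInfiniteClasses.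

Theorem mainTheorem12 (X Y : Type) (rho : X -> X -> Prop) (sigma : Y -> Y -> Prop) :
  countable X -> countable Y ->
  Equivalence rho -> Equivalence sigma ->
  inf_many_singletons rho -> inf_many_singletons sigma ->
  one_class_each_size rho -> one_class_each_size sigma ->
  exactly_one_infinite_class rho -> exactly_two_infinite_classes sigma ->
  elem_equiv rho sigma /\ (condenses rho sigma /\ condenses sigma rho) /\
  ~ linf_equiv rho sigma.
Proof.
  intros cX cY Erho Esigma sing_rho sing_sigma one_rho one_sigma inf_rho inf_sigma.
  split; [|split; [split|]].
  - exact (elem_equiv_of_class_sizes rho sigma one_rho one_sigma sing_rho sing_sigma).
  - exact (condenses_one_into_two_infinite_classes rho sigma cX cY sing_rho sing_sigma
             one_rho one_sigma inf_rho inf_sigma).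
  - exact (condenses_two_into_one_infinite_class rho sigma cX cY sing_rho sing_sigma
             one_rho one_sigma inf_rho inf_sigma).
  - exact (not_linf_equiv_one_two_infinite_classes rho sigma inf_rho inf_sigma).
Qed.
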